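(* Let $n\le m$ and $0<\rho<n$. Then $$\left\lfloor\frac{q^{mn}}{V_\rho(q^m,n)}\right\rfloor+1\le K_{\mathrm R}(q^m,n,\rho)\le q^{m(n-\rho)}.$$
   Context: The rank $\mathrm{rk}(\mathbf x)$ of $\mathbf x\in\mathrm{GF}(q^m)^n$ is the maximum number of its coordinates linearly independent over $\mathrm{GF}(q)$, and $d_{\mathrm R}(\mathbf x,\mathbf y)=\mathrm{rk}(\mathbf x-\mathbf y)$. The rank covering radius of $C\subseteq\mathrm{GF}(q^m)^n$ is $\max_{\mathbf x}\min_{\mathbf c\in C}d_{\mathrm R}(\mathbf x,\mathbf c)$, and $K_{\mathrm R}(q^m,n,\rho)$ is the minimum cardinality of a code in $\mathrm{GF}(q^m)^n$ with rank covering radius $\rho$. $V_\rho(q^m,n)=\sum_{u=0}^\rho {n\brack u}\alpha(m,u)$ is the volume of a ball of rank radius $\rho$, where $\alpha(m,0)=1$, $\alpha(m,u)=\prod_{i=0}^{u-1}(q^m-q^i)$ and ${n\brack u}=\alpha(n,u)/\alpha(u,u)$. *)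

From HB Require Import structures.
From mathcomp Require Import all_boot all_order all_algebra all_field.
Set Implicit Arguments. Unset Strict Implicit. Unset Printing Implicit Defensive.
Import GRing.Theory.

(* GF(q^m) is modelled as a finite field L together with a field embedding
   f : F -> L of a finite field F = GF(q); q := #|F|, and #|L| = q^m. *)

Section RankMetric.
Variables (F L : finFieldType) (f : {rmorphism F -> L}) (n : nat).

Local Open Scope ring_scope.

Definition lin_indep (x : 'rV[L]_n) (S : {set 'I_n}) : bool :=
  [forall c : {ffun 'I_n -> F},
     (\sum_(i in S) f (c i) * x 0 i == 0) ==> [forall i in S, c i == 0]].

Definition rk (x : 'rV[L]_n) : nat :=
  (\max_(S : {set 'I_n} | lin_indep x S) #|S|)%N.

Definition dR (x y : 'rV[L]_n) : nat := rk (x - y).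

Definition covrad (C : {set 'rV[L]_n}) : nat :=
  (\max_(x : 'rV[L]_n) \big[minn/n]_(c in C) dR x c)%N.

Definition KR (rho : nat) : nat :=
  \big[minn/#|{: 'rV[L]_n}|]_(C : {set 'rV[L]_n} | (C != set0) && (covrad C == rho))
     #|C|.

End RankMetric.

Definition alpha (q m u : nat) : nat := \prod_(i < u) (q ^ m - q ^ i).

Definition gbin (q n u : nat) : nat := alpha q n u %/ alpha q u u.

(* volume of a rank-metric ball of radius rho in GF(q^m)^n *)
Definition Vol (q m n rho : nat) : nat :=
  \sum_(u < rho.+1) gbin q n u * alpha q m u.

From HB Require Import structures.
From mathcomp Require Import all_boot all_order all_algebra all_field.
From mathcomp Require Import zify ring.

(* Upper bound: take x of rank rho and a set S of rho coordinates of x that are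
   independent over GF(q).  The vectors vanishing on S form a code of size
   q^(m(n-rho)) with covering radius exactly rho: every y is within rank |S| of
   the codeword agreeing with y off S, while x - c keeps the independent
   coordinates S for every codeword c.
   Lower bound: adding coordinates one at a time shows that there are
   [n u] alpha(m,u) vectors of rank u, so a rank ball of radius rho has
   V = V_rho(q^m,n) points and a covering code has at least q^(mn)/V words.  The
   bound is strict because V does not divide q^(mn) = V_n(q^m,n): for
   e = C(rho+1,2), q^e divides V, the next term of V_n is q^e times a number
   prime to q and all later terms are divisible by q^(e+1), so V/q^e is prime to
   q; dividing a power of q it would be 1, whereas V > q^e. *)

Set Implicit Arguments. Unset Strict Implicit. Unset Printing Implicit Defensive.
Import GRing.Theory.

(* The q-Pascal recursion; unlike [gbin] it involves no division. *)
Fixpoint qbinom (q n u : nat) : nat :=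
  match n, u with
  | _, 0 => 1
  | 0, _.+1 => 0
  | n'.+1, u'.+1 => qbinom q n' u' + q ^ u'.+1 * qbinom q n' u'.+1
  end.

Section GaussianBinomials.
Variable q : nat.
Implicit Types m n u : nat.

Lemma qbinom0 n : qbinom q n 0 = 1.
Proof. by case: n. Qed.

Lemma qbinom_eq0 n u : n < u -> qbinom q n u = 0.
Proof. by elim: n u => [|n IHn] [|u] //= ltnu; rewrite !IHn ?muln0 // ltnW. Qed.

Lemma qbinom_gt0 n u : u <= n -> 0 < qbinom q n u.
Proof.
by elim: n u => [|n IHn] [|u] //= lenu; rewrite ltn_addr // IHn.
Qed.

Lemma coprime_qbinom n u : u <= n -> coprime (qbinom q n u) q.
Proof.
elim: n u => [|n IHn] [|u] //= lenu; rewrite ?qbinom0 ?coprime1n //.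
have [ltun | geun] := ltnP u n; last first.
  by rewrite (@qbinom_eq0 n u.+1) ?ltnS // muln0 addn0 IHn.
by rewrite /coprime addnC expnSr mulnAC gcdnC gcdnMDl gcdnC; apply: IHn.
Qed.

Lemma alpha0 m : alpha q m 0 = 1.
Proof. by rewrite /alpha big_ord0. Qed.

Lemma alphaS m u : alpha q m u.+1 = alpha q m u * (q ^ m - q ^ u).
Proof. by rewrite /alpha big_ord_recr. Qed.

Lemma alphaSS n u : alpha q n.+1 u.+1 = (q ^ n.+1 - 1) * q ^ u * alpha q n u.
Proof.
rewrite /alpha big_ord_recl expn0 -mulnA; congr (_ * _).
have -> : q ^ u = \prod_(i < u) q by rewrite prod_nat_const card_ord.
rewrite -big_split /=.
by apply: eq_bigr => i _; rewrite /bump /= add1n !expnS mulnBr.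
Qed.

Lemma alpha_eq0 m u : m < u -> alpha q m u = 0.
Proof. by move=> ltmu; rewrite /alpha (bigD1 (Ordinal ltmu)) //= subnn. Qed.

Lemma alpha_gt0 m u : 1 < q -> u <= m -> 0 < alpha q m u.
Proof.
move=> q_gt1 leum; rewrite /alpha prodn_gt0 // => i.
by rewrite subn_gt0 ltn_exp2l // (leq_trans (ltn_ord i)).
Qed.

Lemma alpha_qbinom n u : 1 < q -> alpha q n u = qbinom q n u * alpha q u u.
Proof.
move=> q_gt1; elim: n u => [|n IHn] [|u] /=; rewrite ?alpha0 ?muln1 //; first by rewrite alpha_eq0.
rewrite mulnDl -mulnA -IHn [alpha q u.+1 _]alphaSS.
have -> : qbinom q n u * ((q ^ u.+1 - 1) * q ^ u * alpha q u u)
        = (q ^ u.+1 - 1) * q ^ u * alpha q n u by rewrite IHn; ring.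
rewrite alphaSS alphaS.
have [leun | ltnu] := leqP u n; last by rewrite (alpha_eq0 ltnu) !(muln0, mul0n).
have e : q ^ u.+1 * (q ^ n - q ^ u) = q ^ u * (q ^ n.+1 - q ^ u.+1).
  by rewrite !mulnBr -!expnD addSnnS [u.+1 + u]addSnnS.
have -> : q ^ n.+1 - 1 = (q ^ u.+1 - 1) + (q ^ n.+1 - q ^ u.+1).
  have : 0 < q ^ u.+1 <= q ^ n.+1 by rewrite expn_gt0 ltnW // leq_exp2l.
  lia.
by rewrite mulnCA e; ring.
Qed.

Lemma gbinE n u : 1 < q -> gbin q n u = qbinom q n u.
Proof. by move=> q_gt1; rewrite /gbin alpha_qbinom // mulnK //; apply: alpha_gt0. Qed.

Definition alpha_cofactor m u := \prod_(i < u) (q ^ (m - i) - 1).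

Lemma alphaE m u : u <= m -> alpha q m u = q ^ 'C(u, 2) * alpha_cofactor m u.
Proof.
elim: u => [|u IHu] ltum; first by rewrite alpha0 /alpha_cofactor big_ord0.
rewrite alphaS IHu ?(ltnW ltum) // /alpha_cofactor big_ord_recr binS bin1 expnD /=.
have -> : q ^ m - q ^ u = q ^ u * (q ^ (m - u) - 1).
  by rewrite mulnBr muln1 -expnD subnKC // ltnW.
by rewrite -!mulnA; congr (_ * _); rewrite mulnCA.
Qed.

Lemma coprime_expB1 k : 0 < q -> 0 < k -> coprime (q ^ k - 1) q.
Proof.
move=> q_gt0 k_gt0; rewrite -(coprime_pexpr _ _ k_gt0) subn1.
by apply: coprimePn; rewrite expn_gt0 q_gt0.
Qed.

Lemma coprime_alpha_cofactor m u : 0 < q -> u <= m -> coprime (alpha_cofactor m u) q.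
Proof.
move=> q_gt0 leum; rewrite /alpha_cofactor.
elim/big_ind: _ => [|a b|i _]; first exact: coprime1n.
  by rewrite coprimeMl => -> ->.
by rewrite coprime_expB1 // subn_gt0 (leq_trans (ltn_ord i)).
Qed.

Lemma alpha_ge_exp m u : 1 < q -> u < m -> q ^ 'C(u.+1, 2) <= alpha q m u.
Proof.
move=> q_gt1; elim: u => [|u IHu] ltum; first by rewrite alpha0.
rewrite alphaS binS bin1 expnD leq_mul ?IHu ?(ltnW ltum) //.
have : q ^ u.+2 <= q ^ m by rewrite leq_exp2l.
have : q ^ u.+1 = q * q ^ u by rewrite expnS.
have : q ^ u.+2 = q * (q * q ^ u) by rewrite !expnS.
nia.
Qed.

End GaussianBinomials.

Lemma bin2S_leq u : 'C(u.+1, 2) <= u * u.+1.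
Proof. by elim: u => [|u IHu] //; rewrite binS bin1; nia. Qed.

Lemma not_dvdn_exp_split q k e V W R :
  1 < q -> e < k -> q ^ e < V -> coprime W q -> q ^ e.+1 %| R ->
  q ^ k = V + q ^ e * W + R -> ~~ (V %| q ^ k).
Proof.
move=> q_gt1 ltek ltV coWq dvR Ek; apply/negP => dvV.
have dv_e1 : q ^ e.+1 %| q ^ k by apply: dvdn_exp2l.
have /dvdnP [w Ew] : q ^ e %| V.
  have : q ^ e %| q ^ k by apply/dvdn_exp2l/ltnW.
  rewrite Ek -addnA dvdn_addl //; apply: dvdn_add; first exact: dvdn_mulr.
  exact: dvdn_trans (dvdn_exp2l _ (leqnSn e)) dvR.
have q_dv : q %| w + W.
  move: dv_e1; rewrite Ek dvdn_addl // Ew [q ^ e * W]mulnC -mulnDl expnSr mulnC.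
  by rewrite dvdn_pmul2r // expn_gt0 ltnW.
have coWq' : coprime w q.
  rewrite /coprime -dvdn1 -(eqP coWq) dvdn_gcd dvdn_gcdr andbT.
  rewrite -(dvdn_addr W (dvdn_gcdl w q)).
  exact: dvdn_trans (dvdn_gcdr w q) q_dv.
have w1 : w = 1.
  have dvw : w %| q ^ k by apply: dvdn_trans dvV; rewrite Ew dvdn_mulr.
  by have /eqP := coprimeXr k coWq'; rewrite /coprime (gcdn_idPl dvw).
by move: ltV; rewrite Ew w1 mul1n ltnn.
Qed.

Lemma VolE q m n N : 1 < q ->
  Vol q m n N = \sum_(0 <= u < N.+1) qbinom q n u * alpha q m u.
Proof. by move=> q_gt1; rewrite big_mkord; apply: eq_bigr => u _; rewrite gbinE. Qed.

Lemma Vol_gt_exp q m n rho : 1 < q -> 0 < rho -> rho <= n -> rho < m ->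
  q ^ 'C(rho.+1, 2) < Vol q m n rho.
Proof.
move=> q_gt1 rho_gt0 lern ltrm.
rewrite VolE // big_ltn // big_nat_recr //= qbinom0 alpha0 add1n ltnS.
rewrite (leq_trans (alpha_ge_exp _ ltrm)) ?(leq_trans _ (leq_addl _ _)) //.
exact/leq_pmull/qbinom_gt0.
Qed.

Lemma Vol_not_dvdn q m n rho : 1 < q -> 0 < rho -> rho < n -> n <= m ->
  Vol q m n n = q ^ (m * n) -> ~~ (Vol q m n rho %| q ^ (m * n)).
Proof.
move=> q_gt1 rho_gt0 ltrn lenm Vn; set e := 'C(rho.+1, 2).
apply: (@not_dvdn_exp_split _ _ e _ (qbinom q n rho.+1 * alpha_cofactor q m rho.+1)
          (\sum_(rho.+2 <= u < n.+1) qbinom q n u * alpha q m u)) => //.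
- have := bin2S_leq rho; have := leq_mul (leqnn rho) ltrn; have := leq_mul ltrn lenm.
  rewrite mulSn [n * m]mulnC -/e; lia.
- exact: Vol_gt_exp (ltnW ltrn) (leq_trans ltrn lenm).
- rewrite coprimeMl coprime_qbinom //.
  by rewrite coprime_alpha_cofactor ?(ltnW q_gt1) ?(leq_trans ltrn lenm).
- rewrite big_nat_cond; apply: dvdn_sum => u /andP [/andP [le_u lt_u] _].
  rewrite alphaE ?(leq_trans _ lenm) // dvdn_mull // dvdn_mulr // dvdn_exp2l //.
  by have := leq_bin2l 2 le_u; rewrite binS bin1 -/e; lia.
rewrite -Vn !VolE // (big_cat_nat (leq0n _) (leqW ltrn)) (big_ltn (ltrn : rho.+1 < n.+1)).
by rewrite /= alphaE ?(leq_trans ltrn lenm) // mulnCA addnA.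
Qed.

Section CoordinateSpan.
Variables (F L : finFieldType) (f : {rmorphism F -> L}) (n : nat).
Local Open Scope ring_scope.
Implicit Types (x : 'rV[L]_n) (A B S : {set 'I_n}) (c d : {ffun 'I_n -> F}).

Definition fcomb x c A : L := \sum_(i in A) f (c i) * x 0 i.

Definition fspan x A : {set L} := [set fcomb x c A | c : {ffun 'I_n -> F}].

Definition coef_on A c : {ffun 'I_n -> F} := [ffun i => if i \in A then c i else 0].

Lemma fcomb_coef_on x c A B : A \subset B -> fcomb x (coef_on A c) B = fcomb x c A.
Proof.
move=> sAB; rewrite /fcomb big_mkcond [RHS]big_mkcond /=; apply: eq_bigr => i _.
rewrite ffunE; case: (boolP (i \in A)) => iA; first by rewrite (subsetP sAB i iA).
by case: ifP; rewrite ?rmorph0 ?mul0r.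
Qed.

Lemma mem_fspan x c A : fcomb x c A \in fspan x A.
Proof. exact: imset_f. Qed.

Lemma fspanS x A B : A \subset B -> fspan x A \subset fspan x B.
Proof.
move=> sAB; apply/subsetP => _ /imsetP [c _ ->].
by rewrite -(fcomb_coef_on _ _ sAB) mem_fspan.
Qed.

Lemma fspan0 x A : 0 \in fspan x A.
Proof.
apply/imsetP; exists 0 => //; rewrite /fcomb big1 // => i _.
by rewrite ffunE rmorph0 mul0r.
Qed.

Lemma fspan_lin x a s t A :
  s \in fspan x A -> t \in fspan x A -> f a * s + t \in fspan x A.
Proof.
move=> /imsetP [c _ ->] /imsetP [d _ ->].
apply/imsetP; exists [ffun i => a * c i + d i] => //.
rewrite /fcomb mulr_sumr -big_split /=; apply: eq_bigr => i _.
by rewrite ffunE rmorphD rmorphM /= mulrDl mulrA.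
Qed.

Lemma fspan_set0 x : fspan x set0 = [set 0].
Proof.
apply/setP => y; rewrite in_set1; apply/imsetP/eqP => [[c _ ->]|->].
  by rewrite /fcomb big_set0.
by exists 0 => //; rewrite /fcomb big_set0.
Qed.

Lemma fcomb_setU1 x c j A : j \notin A ->
  fcomb x c (j |: A) = f (c j) * x 0 j + fcomb x c A.
Proof. by move=> jA; rewrite /fcomb big_setU1. Qed.

Lemma fspan_setU1 x j A : j \notin A ->
  fspan x (j |: A) = [set f p.1 * x 0 j + p.2 | p in setX [set: F] (fspan x A)].
Proof.
move=> jA; apply/setP => y; apply/imsetP/imsetP => [[c _ ->]|].
  by exists (c j, fcomb x c A); rewrite ?fcomb_setU1 // in_setX in_setT mem_fspan.
case=> [[a s]]; rewrite in_setX /= => /andP [_ /imsetP [d _ ->]] ->.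
exists [ffun i => if i == j then a else d i] => //.
rewrite fcomb_setU1 // ffunE eqxx; congr (_ + _); apply: eq_bigr => i iA.
by rewrite ffunE; case: eqP => // eij; rewrite -eij iA in jA.
Qed.

Lemma card_fspan_setU1 x j A : j \notin A ->
  #|fspan x (j |: A)| =
    if x 0 j \in fspan x A then #|fspan x A| else (#|F| * #|fspan x A|)%N.
Proof.
move=> jA; rewrite fspan_setU1 //; case: ifP => xjA.
  apply: eq_card => y; apply/imsetP/idP => [[[a s]]|yA].
    by rewrite in_setX /= => /andP [_ sA] ->; apply: fspan_lin.
  by exists (0, y); rewrite ?in_setX ?in_setT //= rmorph0 mul0r add0r.
rewrite card_in_imset ?cardsX ?cardsT // => -[a s] [b t].
rewrite !in_setX /= => /andP [_ sA] /andP [_ tA] Est.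
have [eab | neab] := eqVneq a b; first by move: Est; rewrite eab => /addrI ->.
have fab_neq0 : f (a - b) != 0 by rewrite fmorph_eq0 subr_eq0.
have Exj : x 0 j = f (a - b)^-1 * (f (-1) * s + t).
  apply: (mulfI fab_neq0); rewrite mulrA -rmorphM divff ?subr_eq0 // rmorph1 mul1r.
  rewrite rmorphN1 mulN1r rmorphB mulrBl; apply/eqP.
  by rewrite subr_eq [- s + t]addrC addrAC [t + _]addrC -Est addrK.
have : x 0 j \in fspan x A.
  by rewrite Exj -[X in X \in _]addr0; exact: fspan_lin (fspan_lin _ sA tA) (fspan0 _ _).
by rewrite xjA.
Qed.

Lemma lin_indepP x S :
  reflect (forall c, fcomb x c S = 0 -> {in S, forall i, c i = 0}) (lin_indep f x S).
Proof.
apply: (iffP forallP) => [indS c /eqP c0 i iS | indS c].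
  by have /implyP/(_ c0)/forall_inP/(_ i iS)/eqP := indS c.
by apply/implyP => /eqP /indS c0; apply/forall_inP => i /c0 ->.
Qed.

Lemma lin_indep0 x : lin_indep f x set0.
Proof. by apply/lin_indepP => c _ i; rewrite in_set0. Qed.

Lemma lin_indepS x S B : B \subset S -> lin_indep f x S -> lin_indep f x B.
Proof.
move=> sBS /lin_indepP indS; apply/lin_indepP => c c0 i iB.
have := indS (coef_on B c); rewrite fcomb_coef_on // c0.
by move/(_ erefl i (subsetP sBS i iB)); rewrite ffunE iB.
Qed.

Lemma lin_indep_notin x S j :
  lin_indep f x S -> j \in S -> x 0 j \notin fspan x (S :\ j).
Proof.
move/lin_indepP=> indS jS; apply/imsetP => -[c _ Exj].
pose c' := [ffun i => if i == j then -1 else c i].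
have : fcomb x c' S = 0.
  rewrite -(setD1K jS) fcomb_setU1 ?setD11 // ffunE eqxx rmorphN1 mulN1r Exj.
  apply/eqP; rewrite addrC subr_eq0; apply/eqP/eq_bigr => i; rewrite in_setD1 => /andP [nij _].
  by rewrite ffunE (negPf nij).
by move/indS/(_ j jS)/eqP; rewrite ffunE eqxx oppr_eq0 oner_eq0.
Qed.

Lemma lin_indep_setU1 x S j : lin_indep f x S -> j \notin S ->
  x 0 j \notin fspan x S -> lin_indep f x (j |: S).
Proof.
move/lin_indepP=> indS jS xjS; apply/lin_indepP => c; rewrite fcomb_setU1 // => c0.
have cj0 : c j = 0.
  apply/eqP; apply: contraR xjS => cj_neq0.
  have fcj_neq0 : f (c j) != 0 by rewrite fmorph_eq0.
  have -> : x 0 j = f (- (c j)^-1) * fcomb x c S + 0.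
    rewrite addr0; apply: (mulfI fcj_neq0).
    rewrite mulrA -rmorphM mulrN divff // rmorphN1 mulN1r.
    by apply/eqP; rewrite -addr_eq0 c0.
  exact: fspan_lin (mem_fspan _ _ _) (fspan0 _ _).
move: c0; rewrite cj0 rmorph0 mul0r add0r => /indS c0 i.
by rewrite in_setU1 => /predU1P [-> | /c0].
Qed.

Lemma card_fspan_lin_indep x S : lin_indep f x S -> #|fspan x S| = (#|F| ^ #|S|)%N.
Proof.
elim: {S}_.+1 {-2}S (ltnSn #|S|) => // k IHk S ltSk indS.
have [-> | [j jS]] := set_0Vmem S; first by rewrite fspan_set0 cards1 cards0.
have ltSjk : (#|S :\ j| < k)%N by move: ltSk; rewrite (cardsD1 j S) jS.
rewrite -(setD1K jS) card_fspan_setU1 ?setD11 // (negPf (lin_indep_notin indS jS)).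
by rewrite IHk ?(lin_indepS (subD1set S j)) // cardsU1 setD11 expnS.
Qed.

Lemma fspan_basis x A :
  exists2 S : {set 'I_n}, S \subset A & lin_indep f x S /\ fspan x S = fspan x A.
Proof.
elim: {A}_.+1 {-2}A (ltnSn #|A|) => // k IHk A ltAk.
have [-> | [j jA]] := set_0Vmem A; first by exists set0; rewrite ?sub0set ?lin_indep0.
have [|S sSA [indS ES]] := IHk (A :\ j); first by move: ltAk; rewrite (cardsD1 j A) jA.
have jS : j \notin S by apply/negP => /(subsetP sSA); rewrite setD11.
rewrite -(setD1K jA); have [xjS | xjS] := boolP (x 0 j \in fspan x S).
  exists S; first by rewrite subsetU // sSA orbT.
  split=> //; apply/eqP; rewrite eqEcard fspanS ?subsetU ?sSA ?orbT //=.
  by rewrite card_fspan_setU1 ?setD11 // -ES xjS.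
exists (j |: S); first exact: setUS.
split; first exact: lin_indep_setU1.
apply/eqP; rewrite eqEcard fspanS ?setUS //=.
by rewrite !card_fspan_setU1 ?setD11 // -ES (negPf xjS).
Qed.

Lemma rk_witness x : exists2 S, lin_indep f x S & rk f x = #|S|.
Proof.
have [S indS ->] : {S | lin_indep f x S & rk f x = #|S|}.
  by apply: eq_bigmax_cond; apply/card_gt0P; exists set0; exact: lin_indep0.
by exists S.
Qed.

Lemma lin_indep_leq_rk x S : lin_indep f x S -> (#|S| <= rk f x)%N.
Proof. exact: leq_bigmax_cond. Qed.

Lemma rk_leq x : (rk f x <= n)%N.
Proof. by apply/bigmax_leqP => S _; rewrite (leq_trans (max_card _)) ?card_ord. Qed.

Lemma rk_leq_support x S : {in ~: S, forall i, x 0 i = 0} -> (rk f x <= #|S|)%N.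
Proof.
move=> x0; apply/bigmax_leqP => T /lin_indepP indT; apply/subset_leq_card/subsetP => i iT.
apply: contraT => iS; pose c : {ffun 'I_n -> F} := [ffun j => if j == i then 1 else 0].
have /indT/(_ i iT) : fcomb x c T = 0.
  rewrite /fcomb big1 // => j _; rewrite ffunE; case: eqP => [->|_].
    by rewrite x0 ?inE // mulr0.
  by rewrite rmorph0 mul0r.
by rewrite ffunE eqxx => /eqP; rewrite oner_eq0.
Qed.

Lemma lin_indep_eq x x' S : {in S, forall i, x 0 i = x' 0 i} ->
  lin_indep f x S = lin_indep f x' S.
Proof.
move=> Exx'; apply: eq_forallb => c; congr ((_ == 0) ==> _).
by apply: eq_bigr => i /Exx' ->.
Qed.

Lemma rk_fspan x : (#|F| ^ rk f x)%N = #|fspan x setT|.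
Proof.
apply/eqP; rewrite eqn_leq; apply/andP; split.
  have [T indT ->] := rk_witness x.
  by rewrite -(card_fspan_lin_indep indT); apply/subset_leq_card/fspanS/subsetT.
have [S _ [indS <-]] := fspan_basis x setT.
by rewrite card_fspan_lin_indep // leq_exp2l ?finNzRing_gt1 // lin_indep_leq_rk.
Qed.

End CoordinateSpan.

Section RankCount.
Variables (F L : finFieldType) (f : {rmorphism F -> L}) (n : nat).
Local Open Scope ring_scope.
Local Notation q := #|F|.
Implicit Types (x : 'rV[L]_n) (K : 'I_n).

Definition vanishing_on (S : {set 'I_n}) : {set 'rV[L]_n} :=
  [set x : 'rV[L]_n | [forall i in S, x 0 i == 0]].

Definition vanishing_from k := vanishing_on [set i : 'I_n | (k <= i)%N].

Definition prefix k : {set 'I_n} := [set i : 'I_n | (i < k)%N].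

Definition nrank k r : nat :=
  (\sum_(x in vanishing_from k) (#|fspan f x (prefix k)| == q ^ r))%N.

Definition set_coord x K (y : L) : 'rV[L]_n := \row_i (if i == K then y else x 0 i).

Lemma vanishing_onP (S : {set 'I_n}) x : reflect {in S, forall i, x 0 i = 0} (x \in vanishing_on S).
Proof. by rewrite inE; apply: (iffP forall_inP) => x0 i /x0 => [/eqP|->]. Qed.

Lemma vanishing_fromP k x :
  reflect (forall i : 'I_n, (k <= i)%N -> x 0 i = 0) (x \in vanishing_from k).
Proof.
apply: (iffP (vanishing_onP _ _)) => x0 i; first by move=> leki; apply: x0; rewrite inE.
by rewrite inE; apply: x0.
Qed.

Lemma set_coordE x K y i : set_coord x K y 0 i = if i == K then y else x 0 i.
Proof. by rewrite mxE. Qed.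

Lemma set_coord_id x K y : set_coord (set_coord x K y) K (x 0 K) = x.
Proof. by apply/rowP => i; rewrite !mxE; case: eqP => [->|]. Qed.

Lemma sum_vanishing_fromS K (G : 'rV[L]_n -> nat) :
  (\sum_(x in vanishing_from K.+1) G x =
    \sum_(x in vanishing_from K) \sum_(y : L) G (set_coord x K y))%N.
Proof.
rewrite (partition_big (fun x => set_coord x K 0) (mem (vanishing_from K))) /=; last first.
  move=> x /vanishing_fromP x0; apply/vanishing_fromP => i leKi; rewrite set_coordE.
  by case: eqP => // /eqP neiK; apply: x0; rewrite ltn_neqAle leKi andbT eq_sym.
apply: eq_bigr => x /vanishing_fromP x0.
rewrite (reindex_onto (set_coord x K) (fun z => z 0 K)) /=; last first.
  by move=> z /andP [_ /eqP <-]; rewrite set_coord_id.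
apply: eq_bigl => y; rewrite set_coordE eqxx eqxx andbT -(x0 K (leqnn K)) set_coord_id eqxx andbT.
apply/vanishing_fromP => i ltKi; rewrite set_coordE.
have /negPf -> : i != K by apply: contraTneq ltKi => ->; rewrite ltnn.
exact/x0/ltnW.
Qed.

Lemma prefixS K : prefix K.+1 = K |: prefix K.
Proof. by apply/setP => i; rewrite !inE ltnS leq_eqVlt. Qed.

Lemma sum_nat_if_in (T : finType) (S : {set T}) (a b : nat) :
  (\sum_(y : T) (if y \in S then a else b) = #|S| * a + (#|T| - #|S|) * b)%N.
Proof.
rewrite (bigID (mem S)) /= -(cardC S) addKn -!sum_nat_const.
by congr (_ + _); apply: eq_big => // y; [|move/negPf] => ->.
Qed.

Lemma sum_set_coord_fspan x K r (s := #|fspan f x (prefix K)|) :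
  (\sum_(y : L) (#|fspan f (set_coord x K y) (prefix K.+1)| == q ^ r)
     = s * (s == q ^ r) + (#|L| - s) * (q * s == q ^ r))%N.
Proof.
have K_prefix : K \notin prefix K by rewrite inE ltnn.
have Espan y : fspan f (set_coord x K y) (prefix K) = fspan f x (prefix K).
  apply: eq_imset => c; apply: eq_bigr => i iK; rewrite set_coordE.
  by case: eqP iK => // ->; rewrite (negPf K_prefix).
under eq_bigr => y _ do rewrite prefixS card_fspan_setU1 // Espan set_coordE eqxx.
by rewrite -sum_nat_if_in; apply: eq_bigr => y _; case: ifP.
Qed.

(* The new coordinate keeps the span of the prefix for the q^r values lying in
   it, and multiplies its size by q for the #|L| - q^r others. *)
Lemma nrankS K r :
  nrank K.+1 r = (q ^ r * nrank K r +
                  if r is r'.+1 then (#|L| - q ^ r') * nrank K r' else 0)%N.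
Proof.
have q_gt1 := finNzRing_gt1 F.
rewrite /nrank sum_vanishing_fromS big_distrr; case: r => [|r] /=.
  rewrite addn0; apply: eq_bigr => x _; rewrite sum_set_coord_fspan.
  set s := #|_|; have s_gt0 : (0 < s)%N by apply/card_gt0P; exists 0; apply: fspan0.
  rewrite expn0 mul1n (@gtn_eqF 1 (q * s)) ?muln0 ?addn0; last first.
    by rewrite (leq_trans q_gt1) ?leq_pmulr.
  by case: eqP => [->|]; rewrite ?muln0 ?muln1.
rewrite big_distrr -big_split /=; apply: eq_bigr => x _; rewrite sum_set_coord_fspan.
rewrite expnS eqn_pmul2l ?(ltnW q_gt1) //.
by congr (_ + _); case: eqP => [->|]; rewrite ?muln0 ?muln1.
Qed.

Lemma nrank0 r : nrank 0 r = (r == 0%N).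
Proof.
rewrite /nrank; have -> : vanishing_from 0 = [set 0].
  apply/setP => x; rewrite in_set1; apply/vanishing_fromP/eqP => [x0|-> i _].
    by apply/rowP => i; rewrite x0 ?mxE.
  by rewrite mxE.
have -> : prefix 0 = set0 by apply/setP => i; rewrite !inE.
rewrite big_set1 fspan_set0 cards1; case: r => [|r] //=.
by rewrite ltn_eqF // (leq_trans (finNzRing_gt1 F)) // -{1}(expn1 q) leq_exp2l ?finNzRing_gt1.
Qed.

Lemma nrankE m : #|L| = (q ^ m)%N ->
  forall k r, (k <= n)%N -> nrank k r = (qbinom q k r * alpha q m r)%N.
Proof.
move=> cardL; elim=> [|k IHk] r lekn; first by rewrite nrank0; case: r => [|r] //=; rewrite alpha0.
have lekn' := ltnW lekn.
rewrite (nrankS (Ordinal lekn)) /= IHk //; case: r => [|r] /=.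
  by rewrite !qbinom0 !alpha0 expn0 addn0.
by rewrite IHk // alphaS cardL; ring.
Qed.

Lemma nrank_full r : nrank n r = (\sum_(x : 'rV[L]_n) (rk f x == r))%N.
Proof.
rewrite /nrank; have -> : vanishing_from n = setT.
  by apply/setP => x; rewrite in_setT; apply/vanishing_fromP => i; rewrite leqNgt ltn_ord.
have -> : prefix n = setT by apply/setP => i; rewrite !inE ltn_ord.
apply: eq_big => x; first by rewrite inE.
by rewrite -rk_fspan eqn_exp2l // finNzRing_gt1.
Qed.

End RankCount.

Arguments vanishing_on {L n} S.

Lemma bigminn_leq_cond (I : finType) (P : pred I) (F : I -> nat) d j :
  P j -> (\big[minn/d]_(i | P i) F i <= F j)%N.
Proof. by move=> Pj; rewrite -minEnat; exact: (@Order.TotalTheory.bigmin_le_cond _ nat). Qed.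

Lemma leq_bigminn (I : finType) (P : pred I) (F : I -> nat) d k :
  (k <= d)%N -> (forall i, P i -> k <= F i)%N -> (k <= \big[minn/d]_(i | P i) F i)%N.
Proof. by move=> le_kd le_kF; elim/big_ind: _ => // a b; rewrite leq_min => -> ->. Qed.

Lemma sum_ord_eq (a N : nat) : (\sum_(u < N) (a == u :> nat))%N = (a < N).
Proof.
elim: N => [|N IHN]; first by rewrite big_ord0.
by rewrite big_ord_recr /= IHN [in RHS]ltnS [in RHS]leq_eqVlt; case: ltngtP.
Qed.

Section CoveringBounds.
Variables (F L : finFieldType) (f : {rmorphism F -> L}) (m n : nat).
Hypothesis cardL : #|L| = (#|F| ^ m)%N.
Local Open Scope ring_scope.
Local Notation q := #|F|.
Implicit Types (x y : 'rV[L]_n) (C : {set 'rV[L]_n}) (S : {set 'I_n}).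

Lemma card_rV : #|{: 'rV[L]_n}| = (q ^ (m * n))%N.
Proof. by rewrite card_mx cardL mul1n expnM. Qed.

Lemma card_rk_leq rho : (\sum_(x : 'rV[L]_n) (rk f x <= rho))%N = Vol q m n rho.
Proof.
have q_gt1 := finNzRing_gt1 F.
rewrite /Vol; under [RHS]eq_bigr => u _ do
  rewrite gbinE // -(nrankE f cardL u (leqnn n)) nrank_full.
by rewrite exchange_big; apply: eq_bigr => x _; rewrite sum_ord_eq ltnS.
Qed.

Lemma Vol_full : Vol q m n n = (q ^ (m * n))%N.
Proof.
by rewrite -card_rk_leq -card_rV -sum1_card; apply: eq_bigr => x _; rewrite rk_leq.
Qed.

Lemma covrad_cover C rho : (rho < n)%N -> covrad f C = rho ->
  forall y, exists2 c, c \in C & (rk f (y - c) <= rho)%N.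
Proof.
move=> ltrn covC y; apply/exists_inP.
have : (\big[minn/n]_(c in C) dR f y c <= rho)%N.
  by rewrite -covC; apply: (@leq_bigmax _ (fun y => \big[minn/n]_(c in C) dR f y c)) y.
apply: contraTT => /exists_inP noc; rewrite -ltnNge; apply: leq_bigminn => // c cC.
by rewrite ltnNge; apply/negP => le_rho; apply: noc; exists c.
Qed.

Lemma sphere_covering C rho : (rho < n)%N -> covrad f C = rho ->
  (q ^ (m * n) <= #|C| * Vol q m n rho)%N.
Proof.
move=> ltrn covC; rewrite -card_rV -card_rk_leq.
apply: (@leq_trans (\sum_y \sum_(c in C) (rk f (y - c) <= rho))%N).
  rewrite -sum1_card; apply: leq_sum => y _; have [c cC le_rho] := covrad_cover ltrn covC y.
  by rewrite (bigD1 c) //= le_rho.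
rewrite exchange_big /= -sum_nat_const; apply: leq_sum => c _.
by rewrite (reindex_inj (addIr c)) /=; under eq_bigr => y _ do rewrite addrK.
Qed.

Lemma card_covering_code C rho : (0 < rho)%N -> (rho < n)%N -> (n <= m)%N ->
  covrad f C = rho -> (q ^ (m * n) %/ Vol q m n rho + 1 <= #|C|)%N.
Proof.
move=> rho_gt0 ltrn lenm covC; have q_gt1 := finNzRing_gt1 F.
have Vol_gt0 : (0 < Vol q m n rho)%N.
  exact: leq_ltn_trans (Vol_gt_exp _ _ (ltnW ltrn) (leq_trans ltrn lenm)).
rewrite addn1 ltn_divLR // ltn_neqAle sphere_covering // andbT.
apply: contraNneq (Vol_not_dvdn q_gt1 rho_gt0 ltrn lenm Vol_full) => ->.
exact: dvdn_mull.
Qed.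

Lemma exists_rk rho : (rho <= n)%N -> (n <= m)%N -> exists x, rk f x = rho.
Proof.
move=> lern lenm; have q_gt1 := finNzRing_gt1 F.
have : (0 < \sum_(x : 'rV[L]_n) (rk f x == rho))%N.
  rewrite -nrank_full (nrankE f cardL) // muln_gt0 qbinom_gt0 //.
  exact: alpha_gt0 (leq_trans lern lenm).
by rewrite lt0n sum_nat_eq0 negb_forall => /existsP [x]; rewrite eqb0 negbK => /eqP; exists x.
Qed.

Lemma covrad_vanishing_on x S : lin_indep f x S -> covrad f (vanishing_on S) = #|S|.
Proof.
move=> indS; apply/eqP; rewrite eqn_leq; apply/andP; split.
  apply/bigmax_leqP => y _; pose c := \row_i (if i \in S then 0 else y 0 i).
  have cS : c \in vanishing_on S by apply/vanishing_onP => i iS; rewrite mxE iS.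
  apply: leq_trans (bigminn_leq_cond _ _ cS) _.
  by apply: rk_leq_support => i; rewrite inE !mxE => /negPf ->; rewrite subrr.
apply: leq_trans (leq_bigmax x); apply: leq_bigminn => [|c /vanishing_onP c0].
  by rewrite (leq_trans (max_card _)) ?card_ord.
apply: lin_indep_leq_rk; rewrite (@lin_indep_eq _ _ f n _ x) // => i iS.
by rewrite !mxE c0 // subr0.
Qed.

Lemma card_vanishing_on S : (#|@vanishing_on L n S| <= #|L| ^ (n - #|S|))%N.
Proof.
pose restr x : {ffun {i : 'I_n | i \notin S} -> L} := [ffun i => x 0 (val i)].
rewrite -(card_in_imset (f := restr)); last first.
  move=> x x' /vanishing_onP x0 /vanishing_onP x'0 Exx'; apply/rowP => i.
  have [iS | iS] := boolP (i \in S); first by rewrite x0 ?x'0.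
  by have := congr1 (fun g : {ffun _ -> L} => g (exist _ i iS)) Exx'; rewrite !ffunE.
apply: leq_trans (max_card _) _; rewrite card_ffun card_sig.
apply: eq_leq; congr (_ ^ _)%N; rewrite -[X in (X - _)%N](card_ord n) -(cardC S) addKn.
by apply: eq_card.
Qed.

Lemma KR_leq_card C rho : C != set0 -> covrad f C = rho -> (KR f n rho <= #|C|)%N.
Proof. by move=> C0 covC; apply: bigminn_leq_cond; rewrite C0 covC eqxx. Qed.

Lemma leq_KR k rho : (k <= #|{: 'rV[L]_n}|)%N ->
  (forall C, C != set0 -> covrad f C = rho -> k <= #|C|)%N -> (k <= KR f n rho)%N.
Proof. by move=> le_k kC; apply: leq_bigminn => // C /andP [C0 /eqP /kC]; apply. Qed.

End CoveringBounds.

Theorem proposition6 (F L : finFieldType) (f : {rmorphism F -> L})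
  (m n rho : nat) (hL : #|L| = (#|F| ^ m)%N)
  (hnm : (n <= m)%N) (hrho0 : (0 < rho)%N) (hrhon : (rho < n)%N) :
  ((#|F| ^ (m * n)) %/ Vol #|F| m n rho + 1 <= KR f n rho)%N /\
  (KR f n rho <= #|F| ^ (m * (n - rho)))%N.
Proof.
have q_gt1 := finNzRing_gt1 F.
split.
  apply: leq_KR => [|C _]; last exact: card_covering_code.
  have Vol_gt1 : 1 < Vol #|F| m n rho.
    apply: leq_ltn_trans (Vol_gt_exp q_gt1 hrho0 (ltnW hrhon) (leq_trans hrhon hnm)).
    by rewrite expn_gt0 (ltnW q_gt1).
  by rewrite (card_rV _ hL) addn1 ltn_Pdiv // expn_gt0 (ltnW q_gt1).
have [x rk_x] := exists_rk f hL (ltnW hrhon) hnm.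
have [S indS rk_S] := rk_witness f x; rewrite rk_x in rk_S.
have code_neq0 : @vanishing_on L n S != set0.
  by apply/set0Pn; exists 0%R; apply/vanishing_onP => i _; rewrite mxE.
rewrite rk_S; apply: leq_trans (KR_leq_card code_neq0 (covrad_vanishing_on indS)) _.
by rewrite (leq_trans (card_vanishing_on L S)) // hL -expnM.
Qed.
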